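(* Let $\mu>0$ and $\lambda_1>0$, and consider the system $$\frac{dx}{dt}=\lambda_1\bigl(2\mu y-4\mu xy-2x^2-2xy+x\bigr),\qquad \frac{dy}{dt}=\lambda_1\bigl(\mu y-4\mu y^2-2xy-2y^2+y\bigr)$$ on the closed quadrangle $Q\subset\mathbb{R}^2$ defined by $y\ge x/2$, $y\ge 1/2-x$, $y\le 1/3$, $y\le 1/2-x/2$ (with vertices $(1/3,1/6)$, $(1/2,1/4)$, $(1/3,1/3)$, $(1/6,1/3)$). For each value of $\mu$, the system has a unique, globally attracting fixed point $\underline{x}_c(\mu)=(x_c(\mu),y_c(\mu))$ in $Q$. This fixed point lies on the edge $\partial Q_1=Q\cap\{y=x/2\}$. Moreover, the map $\mu\mapsto\underline{x}_c(\mu)$ is one-to-one and onto the interior of the edge $\partial Q_1$, and as $\mu$ grows from $0$ to $\infty$, $\underline{x}_c(\mu)$ changes monotonically between the two endpoints $(1/3,1/6)$ and $(1/2,1/4)$ of this edge.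
   Context: Here $x=V/N^{\star}$ and $y=F/N^{\star}$ are the inverse symbolic coordinates of a crack mosaic ($V$ nodes, $F$ faces, total corner degree $N^{\star}$), $Q$ is the domain of convex mosaics, and the parameter $\mu$ is the ratio of the rate of secondary cracking events to the rate of crack healing events. ''Globally attracting in $Q$'' means every solution starting in $Q$ converges to it as $t\to\infty$. *)

From Stdlib Require Import Reals Lra.
From Coquelicot Require Import Coquelicot.
Open Scope R_scope.

Definition Fx (lam mu x y : R) : R :=
  lam * (2 * mu * y - 4 * mu * x * y - 2 * x ^ 2 - 2 * x * y + x).
Definition Fy (lam mu x y : R) : R :=
  lam * (mu * y - 4 * mu * y ^ 2 - 2 * x * y - 2 * y ^ 2 + y).

Definition inQ (x y : R) : Prop :=
  x / 2 <= y /\ 1 / 2 - x <= y /\ y <= 1 / 3 /\ y <= 1 / 2 - x / 2.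

Definition is_solution (lam mu : R) (x y : R -> R) : Prop :=
  (forall t, 0 < t ->
      is_derive x t (Fx lam mu (x t) (y t)) /\
      is_derive y t (Fy lam mu (x t) (y t))) /\
  filterlim x (at_right 0) (locally (x 0)) /\
  filterlim y (at_right 0) (locally (y 0)).

From Stdlib Require Import Reals Lra.
From Coquelicot Require Import Coquelicot.
Open Scope R_scope.

(* With u = x - 2 y and g = 1 - 4 mu y - 2 x - 2 y the system reads u' = lam g u and
   y' = lam (g + mu) y, so u / y decays like exp (- lam mu t): trajectories approach the edge
   y = x / 2.  Substituting x = (2 + C exp (- lam mu t)) y turns the y-equation into a Bernoulli
   equation, whose reciprocal 1 / y solves an explicit linear equation and tends to
   (4 mu + 6) / (mu + 1).  Both identities hold because their defect f solves f' = k f with k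
   locally bounded and f -> 0 at 0+, hence vanishes (Gronwall); only y(0) > 0 is used. *)

Lemma filterlim_plus_fun {T} {F : (T -> Prop) -> Prop} {FF : Filter F} (f g : T -> R) a b :
  filterlim f F (locally a) -> filterlim g F (locally b) ->
  filterlim (fun t => f t + g t) F (locally (a + b)).
Proof. intros Hf Hg. exact (filterlim_comp_2 _ _ _ Hf Hg (filterlim_plus a b)). Qed.

Lemma filterlim_mult_fun {T} {F : (T -> Prop) -> Prop} {FF : Filter F} (f g : T -> R) a b :
  filterlim f F (locally a) -> filterlim g F (locally b) ->
  filterlim (fun t => f t * g t) F (locally (a * b)).
Proof. intros Hf Hg. exact (filterlim_comp_2 _ _ _ Hf Hg (filterlim_mult a b)). Qed.

Lemma filterlim_at_right_ex_derive (f : R -> R) a :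
  ex_derive f a -> filterlim f (at_right a) (locally (f a)).
Proof.
  intros Hd. apply (filterlim_filter_le_1 _ (filter_le_within _)).
  exact (ex_derive_continuous (K := R_AbsRing) (V := R_NormedModule) f a Hd).
Qed.

Lemma is_lim_exp_decay c : 0 < c -> is_lim (fun t => exp (- c * t)) p_infty 0.
Proof.
  intros Hc. apply (is_lim_comp exp (fun t => - c * t) p_infty 0 m_infty).
  - exact is_lim_exp_m.
  - replace m_infty with (Rbar_mult (- c) p_infty).
    + exact (is_lim_scal_l (fun t => t) (- c) p_infty p_infty (is_lim_id p_infty)).
    + simpl. destruct (Rle_dec 0 (- c)); [exfalso; lra | reflexivity].
  - exists 0. intros t _. discriminate.
Qed.

Lemma bounded_right_continuous (f : R -> R) (l a T : R) :
  (forall t, a < t -> continuous f t) -> filterlim f (at_right a) (locally l) ->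
  exists M, forall t, a < t <= T -> Rabs (f t) <= M.
Proof.
  intros Hc Hl.
  set (b := Rmax a T + 1).
  assert (Hab : a < b) by (unfold b; pose proof (Rmax_l a T); lra).
  destruct (C0_extension_left f l a b Hab (fun c Hc' => Hc c (proj1 Hc')) Hl)
    as [g [Hg [Hgf _]]].
  destruct (bounded_continuity (K := R_AbsRing) g a T) as [M HM].
  - intros c Hc'. apply Hg. unfold b. pose proof (Rmax_r a T). lra.
  - exists M. intros t Ht. rewrite <- Hgf by lra. left. apply (HM t). lra.
Qed.

Lemma derive_nonpos_nonincreasing (g dg : R -> R) (a b : R) :
  (forall c, a < c <= b -> is_derive g c (dg c)) -> (forall c, a < c <= b -> dg c <= 0) ->
  forall s, a < s <= b -> g b <= g s.
Proof.
  intros Hd Hneg s Hs.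
  destruct (Req_dec s b) as [-> | Hsb]; [lra |].
  destruct (MVT_gen g s b dg) as [c [Hc Hgc]];
    rewrite ?Rmin_left, ?Rmax_right in * by lra.
  - intros c Hc. apply Hd. lra.
  - intros c Hc. apply continuity_pt_filterlim, (ex_derive_continuous g).
    exists (dg c). apply Hd. lra.
  - assert (dg c <= 0) by (apply Hneg; lra). nra.
Qed.

(* Gronwall: [f ^ 2 * exp (-2 K t)] is nonincreasing whenever [|k| <= K]. *)
Lemma linear_ode_zero (f k : R -> R) (a : R) :
  filterlim f (at_right a) (locally 0) ->
  (forall t, a < t -> is_derive f t (k t * f t)) ->
  (forall T, exists K, forall t, a < t <= T -> Rabs (k t) <= K) ->
  forall t, a < t -> f t = 0.
Proof.
  intros Hf0 Hd Hb t Ht.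
  destruct (Hb t) as [K HK].
  set (g := fun s => f s * f s * exp (- (2 * K) * s)).
  assert (Hdec : forall s, a < s <= t -> g t <= g s).
  { apply (derive_nonpos_nonincreasing g
             (fun s => (2 * k s - 2 * K) * (f s * f s) * exp (- (2 * K) * s))).
    - intros s Hs.
      assert (He : is_derive (fun s => exp (- (2 * K) * s)) s (- (2 * K) * exp (- (2 * K) * s)))
        by (auto_derive; [exact I | ring]).
      pose proof (is_derive_mult _ _ _ _ _
                    (is_derive_mult _ _ _ _ _ (Hd s (proj1 Hs)) (Hd s (proj1 Hs)) Rmult_comm)
                    He Rmult_comm) as H.
      refine (eq_ind _ (is_derive g s) H _ _).
      unfold plus, mult; simpl. ring.
    - intros s Hs. pose proof (Rle_abs (k s)). pose proof (HK s Hs).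
      assert (0 <= f s * f s * exp (- (2 * K) * s))
        by (apply Rmult_le_pos; [nra | left; apply exp_pos]).
      rewrite Rmult_assoc. nra. }
  assert (Hg0 : filterlim g (at_right a) (locally (0 * 0 * exp (- (2 * K) * a)))).
  { apply filterlim_mult_fun; [apply filterlim_mult_fun; exact Hf0 |].
    apply filterlim_at_right_ex_derive with (f := fun s => exp (- (2 * K) * s)).
    auto_derive. exact I. }
  rewrite !Rmult_0_l in Hg0.
  assert (Hgt : g t <= 0).
  { apply (filterlim_le (F := at_right a) (fun _ => g t) g (g t) 0);
      [| apply filterlim_const | exact Hg0].
    exists (mkposreal (t - a) ltac:(lra)). intros s Hs Has.
    change (Rabs (s - a) < t - a) in Hs.
    apply Hdec. apply Rabs_def2 in Hs. lra. }
  unfold g in Hgt. pose proof (exp_pos (- (2 * K) * t)).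
  assert (f t * f t <= 0) by nra. nra.
Qed.

Lemma Fy_factor lam mu x y :
  Fy lam mu x y = lam * (mu + 1 - 4 * mu * y - 2 * x - 2 * y) * y.
Proof. unfold Fy. ring. Qed.

Lemma Fx_sub_2Fy lam mu x y :
  Fx lam mu x y - 2 * Fy lam mu x y = lam * (1 - 4 * mu * y - 2 * x - 2 * y) * (x - 2 * y).
Proof. unfold Fx, Fy. ring. Qed.

Definition xcrit (mu : R) : R := (mu + 1) / (2 * mu + 3).
Definition ycrit (mu : R) : R := xcrit mu / 2.

Lemma xcrit_fixed lam mu : 0 <= mu ->
  Fx lam mu (xcrit mu) (ycrit mu) = 0 /\ Fy lam mu (xcrit mu) (ycrit mu) = 0.
Proof. intros Hmu. unfold Fx, Fy, ycrit, xcrit. split; field; lra. Qed.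

Lemma fixed_point_unique lam mu x y : 0 < lam -> 0 < mu -> 0 < y ->
  Fx lam mu x y = 0 -> Fy lam mu x y = 0 -> x = xcrit mu /\ y = ycrit mu.
Proof.
  intros Hlam Hmu Hy HFx HFy.
  assert (Hg : mu + 1 - 4 * mu * y - 2 * x - 2 * y = 0).
  { rewrite Fy_factor in HFy.
    destruct (Rmult_integral _ _ HFy) as [H | H]; [| lra].
    destruct (Rmult_integral _ _ H); lra. }
  assert (Hu : x - 2 * y = 0).
  { pose proof (Fx_sub_2Fy lam mu x y) as H.
    rewrite HFx, HFy, Rmult_0_r, Rminus_0_r in H.
    destruct (Rmult_integral _ _ (eq_sym H)) as [H' | H']; [| exact H'].
    destruct (Rmult_integral _ _ H'); lra. }
  assert (Hyc : y = ycrit mu).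
  { unfold ycrit, xcrit. apply (Rmult_eq_reg_r (4 * mu + 6)); [| lra].
    replace ((mu + 1) / (2 * mu + 3) / 2 * (4 * mu + 6)) with (mu + 1) by (field; lra).
    lra. }
  split; [unfold ycrit in Hyc |]; lra.
Qed.

Section Attraction.

Variables (lam mu : R) (x y : R -> R).
Hypotheses (Hlam : 0 < lam) (Hmu : 0 < mu) (Hsol : is_solution lam mu x y) (Hy0 : 0 < y 0).

Let C : R := (x 0 - 2 * y 0) / y 0.

(* The solution of z' = - lam (mu + 1) z + lam (4 mu + 6 + 2 C exp (- lam mu t)), z(0) = 1 / y(0),
   the equation satisfied by 1 / y once x = (2 + C exp (- lam mu t)) y. *)
Let Z (t : R) : R :=
  / y 0 * exp (- (lam * (mu + 1)) * t)
  + (4 * mu + 6) / (mu + 1) * (1 - exp (- (lam * (mu + 1)) * t))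
  + 2 * C * (exp (- (lam * mu) * t) - exp (- (lam * (mu + 1)) * t)).

Lemma solution_continuous t : 0 < t -> continuous x t /\ continuous y t.
Proof.
  intros Ht. destruct (proj1 Hsol t Ht) as [Hx Hy].
  split; apply (ex_derive_continuous (K := R_AbsRing) (V := R_NormedModule));
    eexists; eassumption.
Qed.

Lemma solution_locally_bounded T :
  exists M, forall t, 0 < t <= T -> Rabs (x t) <= M /\ Rabs (y t) <= M.
Proof.
  destruct Hsol as [_ [Hxr Hyr]].
  destruct (bounded_right_continuous x (x 0) 0 T
              (fun t Ht => proj1 (solution_continuous t Ht)) Hxr) as [Mx HMx].
  destruct (bounded_right_continuous y (y 0) 0 T
              (fun t Ht => proj2 (solution_continuous t Ht)) Hyr) as [My HMy].
  exists (Rmax Mx My). intros t Ht. split.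
  - eapply Rle_trans; [apply HMx, Ht | apply Rmax_l].
  - eapply Rle_trans; [apply HMy, Ht | apply Rmax_r].
Qed.

Lemma edge_gap t : 0 < t -> x t = (2 + C * exp (- (lam * mu) * t)) * y t.
Proof.
  intros Ht.
  set (E := fun s => x s - (2 + C * exp (- (lam * mu) * s)) * y s).
  enough (E t = 0) by (unfold E in *; lra).
  apply (linear_ode_zero E (fun s => lam * (1 - 4 * mu * y s - 2 * x s - 2 * y s)) 0);
    [| | | exact Ht].
  - destruct Hsol as [_ [Hxr Hyr]].
    apply (filterlim_ext (fun s => x s + - (2 + C * exp (- (lam * mu) * s)) * y s));
      [intro s; unfold E; ring |].
    replace 0 with (x 0 + - (2 + C * exp (- (lam * mu) * 0)) * y 0) at 2
      by (rewrite Rmult_0_r, exp_0; unfold C; field; lra).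
    apply filterlim_plus_fun; [exact Hxr |]. apply filterlim_mult_fun; [| exact Hyr].
    apply filterlim_at_right_ex_derive with (f := fun s => - (2 + C * exp (- (lam * mu) * s))).
    auto_derive. exact I.
  - intros s Hs. destruct (proj1 Hsol s Hs) as [Hx Hy].
    assert (He : is_derive (fun s => 2 + C * exp (- (lam * mu) * s)) s
                   (C * (- (lam * mu) * exp (- (lam * mu) * s))))
      by (auto_derive; [exact I | ring]).
    pose proof (is_derive_minus _ _ _ _ _ Hx (is_derive_mult _ _ _ _ _ He Hy Rmult_comm)) as H.
    refine (eq_ind _ (is_derive E s) H _ _).
    unfold minus, plus, opp, mult; simpl. unfold E, Fx, Fy. ring.
  - intros T. destruct (solution_locally_bounded T) as [M HM].
    exists (lam * (1 + 4 * mu * M + 4 * M)). intros s Hs.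
    destruct (HM s Hs) as [Hxs Hys].
    apply Rabs_le_between in Hxs. apply Rabs_le_between in Hys.
    rewrite Rabs_mult, (Rabs_pos_eq lam) by lra.
    apply Rmult_le_compat_l; [lra |]. apply Rabs_le. split; nra.
Qed.

Lemma Z_mul_y t : 0 < t -> Z t * y t = 1.
Proof.
  intros Ht.
  set (D := fun s => Z s * y s - 1).
  enough (D t = 0) by (unfold D in *; lra).
  apply (linear_ode_zero D
           (fun s => - (lam * (4 * mu + 6 + 2 * C * exp (- (lam * mu) * s)) * y s)) 0);
    [| | | exact Ht].
  - destruct Hsol as [_ [_ Hyr]].
    apply (filterlim_ext (fun s => Z s * y s + -1)); [intro s; unfold D; ring |].
    replace 0 with (Z 0 * y 0 + -1) at 2
      by (unfold Z; rewrite !Rmult_0_r, !exp_0; field; lra).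
    apply filterlim_plus_fun; [| apply filterlim_const].
    apply filterlim_mult_fun; [| exact Hyr].
    apply filterlim_at_right_ex_derive. unfold Z. auto_derive. lra.
  - intros s Hs. destruct (proj1 Hsol s Hs) as [_ Hy].
    assert (HZ : is_derive Z s (- (lam * (mu + 1)) * Z s
                                + lam * (4 * mu + 6 + 2 * C * exp (- (lam * mu) * s))))
      by (unfold Z; auto_derive; [lra | field; lra]).
    pose proof (is_derive_minus _ _ _ _ _ (is_derive_mult _ _ _ _ _ HZ Hy Rmult_comm)
                  (is_derive_const 1 s)) as H.
    refine (eq_ind _ (is_derive D s) H _ _).
    unfold minus, plus, opp, mult, zero; simpl. unfold D, Fy. rewrite (edge_gap s Hs). ring.
  - intros T. destruct (solution_locally_bounded T) as [M HM].
    exists (lam * (4 * mu + 6 + 2 * Rabs C) * M). intros s Hs.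
    destruct (HM s Hs) as [_ Hys].
    assert (He : 0 < exp (- (lam * mu) * s) <= 1).
    { split; [apply exp_pos |]. rewrite <- exp_0. left. apply exp_increasing.
      pose proof (Rmult_lt_0_compat _ _ (Rmult_lt_0_compat _ _ Hlam Hmu) (proj1 Hs)). lra. }
    assert (HA : Rabs (4 * mu + 6 + 2 * C * exp (- (lam * mu) * s)) <= 4 * mu + 6 + 2 * Rabs C).
    { pose proof (proj1 (Rabs_le_between C (Rabs C)) (Rle_refl _)). apply Rabs_le. split; nra. }
    rewrite Rabs_Ropp, !Rabs_mult, (Rabs_pos_eq lam) by lra.
    apply Rmult_le_compat; [| apply Rabs_pos | | exact Hys].
    + apply Rmult_le_pos; [lra | apply Rabs_pos].
    + apply Rmult_le_compat_l; [lra | exact HA].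
Qed.

Lemma is_lim_Z : is_lim Z p_infty ((4 * mu + 6) / (mu + 1)).
Proof.
  pose proof (is_lim_exp_decay (lam * mu) ltac:(nra)) as H1.
  pose proof (is_lim_exp_decay (lam * (mu + 1)) ltac:(nra)) as H2.
  replace ((4 * mu + 6) / (mu + 1))
    with (/ y 0 * 0 + (4 * mu + 6) / (mu + 1) * (1 - 0) + 2 * C * (0 - 0)) by ring.
  repeat (apply filterlim_plus_fun || apply filterlim_mult_fun);
    try apply filterlim_const; try assumption.
  all: eapply filterlim_comp; [exact H2 | exact (filterlim_opp 0)].
Qed.

Lemma y_converges : is_lim y p_infty (ycrit mu).
Proof.
  apply (is_lim_ext_loc (fun t => / Z t)).
  - exists 0. intros t Ht. pose proof (Z_mul_y t Ht) as H.
    assert (HZ : Z t <> 0) by (intro H0; rewrite H0 in H; lra).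
    apply (Rmult_eq_reg_l (Z t)); [rewrite Rinv_r by exact HZ; lra | exact HZ].
  - replace (ycrit mu) with (/ ((4 * mu + 6) / (mu + 1))) by (unfold ycrit, xcrit; field; lra).
    apply (is_lim_inv Z p_infty _ is_lim_Z).
    intro H. injection H. apply Rgt_not_eq, Rdiv_lt_0_compat; lra.
Qed.

Lemma x_converges : is_lim x p_infty (xcrit mu).
Proof.
  apply (is_lim_ext_loc (fun t => (2 + C * exp (- (lam * mu) * t)) * y t)).
  - exists 0. intros t Ht. symmetry. exact (edge_gap t Ht).
  - replace (xcrit mu) with ((2 + C * 0) * ycrit mu) by (unfold ycrit; field).
    apply filterlim_mult_fun; [| exact y_converges].
    apply filterlim_plus_fun; [apply filterlim_const |].
    apply filterlim_mult_fun; [apply filterlim_const |].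
    exact (is_lim_exp_decay (lam * mu) ltac:(nra)).
Qed.

End Attraction.

Lemma xcrit_bounds mu : 0 < mu -> 1 / 3 < xcrit mu < 1 / 2.
Proof.
  intros Hmu.
  assert (H : xcrit mu * (2 * mu + 3) = mu + 1) by (unfold xcrit; field; lra).
  split; nra.
Qed.

Lemma xcrit_increasing mu1 mu2 : 0 <= mu1 -> mu1 < mu2 -> xcrit mu1 < xcrit mu2.
Proof.
  intros H1 H12.
  assert (Hd : xcrit mu2 - xcrit mu1 = (mu2 - mu1) / ((2 * mu1 + 3) * (2 * mu2 + 3)))
    by (unfold xcrit; field; lra).
  assert (0 < (mu2 - mu1) / ((2 * mu1 + 3) * (2 * mu2 + 3))) by (apply Rdiv_lt_0_compat; nra).
  lra.
Qed.

Lemma xcrit_injective mu1 mu2 : 0 <= mu1 -> 0 <= mu2 -> xcrit mu1 = xcrit mu2 -> mu1 = mu2.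
Proof.
  intros H1 H2 Heq.
  destruct (Rtotal_order mu1 mu2) as [H | [H | H]]; [| exact H |].
  - pose proof (xcrit_increasing mu1 mu2 H1 H). lra.
  - pose proof (xcrit_increasing mu2 mu1 H2 H). lra.
Qed.

Lemma xcrit_surjective x : 1 / 3 < x < 1 / 2 -> exists mu, 0 < mu /\ xcrit mu = x.
Proof.
  intros Hx. exists ((3 * x - 1) / (1 - 2 * x)). split.
  - apply Rdiv_lt_0_compat; lra.
  - unfold xcrit. field. lra.
Qed.

Lemma xcrit_at_0 : filterlim xcrit (at_right 0) (locally (1 / 3)).
Proof.
  replace (1 / 3) with (xcrit 0) by (unfold xcrit; field).
  apply filterlim_at_right_ex_derive. unfold xcrit. auto_derive. lra.
Qed.

Lemma xcrit_at_infty : is_lim xcrit p_infty (1 / 2).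
Proof.
  assert (Hinv : is_lim (fun mu => / (4 * mu + 6)) p_infty 0).
  { apply (is_lim_inv (fun mu => 4 * mu + 6) p_infty p_infty); [| discriminate].
    apply (is_lim_le_p_loc (fun mu => mu)); [| apply is_lim_id].
    exists 0. intros mu Hmu. lra. }
  pose proof (is_lim_minus' _ _ p_infty (1 / 2) 0 (is_lim_const (1 / 2) p_infty) Hinv) as H.
  rewrite Rminus_0_r in H.
  refine (is_lim_ext_loc _ _ _ _ _ H).
  exists 0. intros mu Hmu. unfold xcrit. field. lra.
Qed.

Theorem proposition1 (lam : R) (Hlam : 0 < lam) :
  exists xc yc : R -> R,
    (forall mu : R, 0 < mu ->
       (* fixed point in Q *)
       inQ (xc mu) (yc mu) /\
       Fx lam mu (xc mu) (yc mu) = 0 /\ Fy lam mu (xc mu) (yc mu) = 0 /\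
       (* unique fixed point in Q *)
       (forall x y, inQ x y -> Fx lam mu x y = 0 -> Fy lam mu x y = 0 ->
          x = xc mu /\ y = yc mu) /\
       (* globally attracting in Q *)
       (forall x y : R -> R, is_solution lam mu x y -> inQ (x 0) (y 0) ->
          is_lim x p_infty (xc mu) /\ is_lim y p_infty (yc mu)) /\
       (* lies on the edge y = x/2 *)
       yc mu = xc mu / 2) /\
    (* one-to-one on mu > 0 *)
    (forall mu1 mu2, 0 < mu1 -> 0 < mu2 ->
       xc mu1 = xc mu2 -> yc mu1 = yc mu2 -> mu1 = mu2) /\
    (* onto the interior of the edge Q /\ {y = x/2} *)
    (forall x, 1 / 3 < x < 1 / 2 ->
       exists mu, 0 < mu /\ xc mu = x /\ yc mu = x / 2) /\
    (* monotone motion along the edge *)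
    (forall mu1 mu2, 0 < mu1 -> mu1 < mu2 ->
       xc mu1 < xc mu2 /\ yc mu1 < yc mu2) /\
    (* endpoints: (1/3,1/6) as mu -> 0+, (1/2,1/4) as mu -> +oo *)
    filterlim xc (at_right 0) (locally (1 / 3)) /\
    filterlim yc (at_right 0) (locally (1 / 6)) /\
    is_lim xc p_infty (1 / 2) /\ is_lim yc p_infty (1 / 4).
Proof.
  exists xcrit, ycrit.
  split; [| split; [| split; [| split; [| split; [| split; [| split]]]]]].
  - intros mu Hmu. pose proof (xcrit_bounds mu Hmu).
    destruct (xcrit_fixed lam mu ltac:(lra)) as [HFx HFy].
    split; [unfold inQ, ycrit; lra |]. do 2 (split; [assumption |]).
    split; [| split; [| reflexivity]].
    + intros x y HQ. apply fixed_point_unique; [exact Hlam | exact Hmu |]. unfold inQ in HQ. lra.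
    + intros x y Hsol HQ. assert (Hy0 : 0 < y 0) by (unfold inQ in HQ; lra).
      exact (conj (x_converges lam mu x y Hlam Hmu Hsol Hy0)
                  (y_converges lam mu x y Hlam Hmu Hsol Hy0)).
  - intros mu1 mu2 H1 H2 Hx _. apply xcrit_injective; [lra | lra | exact Hx].
  - intros x Hx. destruct (xcrit_surjective x Hx) as [mu [Hmu Hxc]].
    exists mu. unfold ycrit. rewrite Hxc. auto.
  - intros mu1 mu2 H1 H12. pose proof (xcrit_increasing mu1 mu2 ltac:(lra) H12).
    unfold ycrit. lra.
  - exact xcrit_at_0.
  - replace (1 / 6) with (1 / 3 * / 2) by field.
    apply filterlim_mult_fun; [exact xcrit_at_0 | apply filterlim_const].
  - exact xcrit_at_infty.
  - replace (1 / 4) with (1 / 2 * / 2) by field.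
    apply filterlim_mult_fun; [exact xcrit_at_infty | apply filterlim_const].
Qed.
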